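(* Let $(v_k)$ be a weakly null sequence in a Banach space $V$. Then for every $\varepsilon>0$ there exist integers $k_0<\dots<k_j$ and $\lambda_0,\dots,\lambda_j\ge0$ with $\sum_{i=0}^j\lambda_i=1$ such that $\max_{0\le i\le j}\lambda_i\le\varepsilon$ and $\max\{\|\sum_{i\in F}\lambda_iv_{k_i}\|: F\subseteq\{0,\dots,j\}\}\le\varepsilon$. *)

From Stdlib Require Import Reals.
Open Scope R_scope.

Record BanachSpace := {
  car :> Type;
  vzero : car;
  vadd : car -> car -> car;
  vopp : car -> car;
  vscal : R -> car -> car;
  vnorm : car -> R;
  vadd_assoc : forall x y z, vadd x (vadd y z) = vadd (vadd x y) z;
  vadd_comm : forall x y, vadd x y = vadd y x;
  vadd_0 : forall x, vadd x vzero = x;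
  vadd_opp : forall x, vadd x (vopp x) = vzero;
  vscal_1 : forall x, vscal 1 x = x;
  vscal_assoc : forall a b x, vscal a (vscal b x) = vscal (a * b) x;
  vscal_distr_v : forall a x y, vscal a (vadd x y) = vadd (vscal a x) (vscal a y);
  vscal_distr_r : forall a b x, vscal (a + b) x = vadd (vscal a x) (vscal b x);
  vnorm_nonneg : forall x, 0 <= vnorm x;
  vnorm_eq0 : forall x, vnorm x = 0 -> x = vzero;
  vnorm_scal : forall a x, vnorm (vscal a x) = Rabs a * vnorm x;
  vnorm_triangle : forall x y, vnorm (vadd x y) <= vnorm x + vnorm y;
  vcomplete : forall u : nat -> car,
    (forall e, e > 0 -> exists N, forall n m, (n >= N)%nat -> (m >= N)%nat ->
        vnorm (vadd (u n) (vopp (u m))) < e) ->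
    exists l, forall e, e > 0 -> exists N, forall n, (n >= N)%nat ->
        vnorm (vadd (u n) (vopp l)) < e
}.

Arguments vzero {b} : rename.
Arguments vadd {b} : rename.
Arguments vopp {b} : rename.
Arguments vscal {b} : rename.
Arguments vnorm {b} : rename.

Definition is_dual_functional (V : BanachSpace) (f : V -> R) : Prop :=
  (forall x y, f (vadd x y) = f x + f y) /\
  (forall a x, f (vscal a x) = a * f x) /\
  (exists C, forall x, Rabs (f x) <= C * vnorm x).

Definition weakly_null (V : BanachSpace) (v : nat -> V) : Prop :=
  forall f : V -> R, is_dual_functional V f -> Un_cv (fun k => f (v k)) 0.

Fixpoint vsum {V : BanachSpace} (n : nat) (w : nat -> V) : V :=
  match n with
  | O => vzero
  | S m => vadd (vsum m w) (w m)
  end.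

(* Passing to a subsequence, (v_k) may be assumed bounded: otherwise a gliding-hump series
   sum_j 3^-j f_j of norming functionals (Hahn-Banach) stays away from 0 along (v_k).

   So let (u_n) be weakly null and bounded by M, and write P(y) = sup_F |sum_(n in F) y_n u_n|.
   Suppose every probability block y with entries <= eps has P(y) > c.  Build weights
   S_(K+1) = S_K + 2^-(K+1) y_K, where y_K is a block beyond the support [0, A_K) of S_K that
   almost minimises P(S_K + 2^-K y); call alpha_K that minimum.  Convexity of P gives
   alpha_K - P(S_K) >= 2^-K c/2.  On the other hand the vectors sum_(n in F) S_L(n) u_n converge
   for every F; let F* maximise the norm of the limit (the Cantor space is compact) and let f norm
   that limit.  Up to O(2^-L), alpha_K <= P(S_L) <= |lim F*| <= sum_n S_L(n) f(u_n)^+, and as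
   f(u_n) -> 0 the last sum is at most P(S_K) + 2^-K c/4 for K large: a contradiction. *)

From Stdlib Require Import Reals Lra Lia Classical ClassicalEpsilon FunctionalExtensionality PropExtensionality.
Open Scope R_scope.

Arguments vadd_assoc {b} : rename. Arguments vadd_comm {b} : rename.
Arguments vadd_0 {b} : rename. Arguments vadd_opp {b} : rename.
Arguments vscal_1 {b} : rename. Arguments vscal_assoc {b} : rename.
Arguments vscal_distr_v {b} : rename. Arguments vscal_distr_r {b} : rename.
Arguments vnorm_nonneg {b} : rename. Arguments vnorm_scal {b} : rename.
Arguments vnorm_triangle {b} : rename. Arguments vcomplete {b} : rename.

Lemma Rabs_le_bounds (x a : R) : Rabs x <= a -> - a <= x /\ x <= a.
Proof. unfold Rabs; destruct (Rcase_abs x); intros; lra. Qed.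

Section VectorAlgebra.
Context {V : BanachSpace}.
Implicit Types x y z : V.

Lemma vadd_0l x : vadd vzero x = x.
Proof. rewrite vadd_comm; apply vadd_0. Qed.

Lemma vadd_cancel x y z : vadd x y = vadd x z -> y = z.
Proof.
  intro E.
  assert (E' : vadd (vopp x) (vadd x y) = vadd (vopp x) (vadd x z)) by (rewrite E; reflexivity).
  rewrite !vadd_assoc, (vadd_comm (vopp x) x), vadd_opp, !vadd_0l in E'. exact E'.
Qed.

Lemma vscal_0 x : vscal 0 x = vzero.
Proof. apply (vadd_cancel (vscal 0 x)). rewrite vadd_0, <- vscal_distr_r. f_equal. ring. Qed.

Lemma vscal_v0 (a : R) : vscal a (@vzero V) = vzero.
Proof. rewrite <- (vscal_0 vzero), vscal_assoc, Rmult_0_r. reflexivity. Qed.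

Lemma vopp_scal x : vopp x = vscal (-1) x.
Proof.
  apply (vadd_cancel x). rewrite vadd_opp.
  transitivity (vadd (vscal 1 x) (vscal (-1) x)); [| rewrite vscal_1; reflexivity].
  rewrite <- vscal_distr_r. replace (1 + -1) with 0 by ring. symmetry; apply vscal_0.
Qed.

Lemma vnorm_0 : vnorm (@vzero V) = 0.
Proof. rewrite <- (vscal_0 vzero), vnorm_scal, Rabs_R0; ring. Qed.

Lemma vnorm_opp x : vnorm (vopp x) = vnorm x.
Proof. rewrite vopp_scal, vnorm_scal, Rabs_left by lra. ring. Qed.

Lemma vadd_ACA (a b c d : V) : vadd (vadd a b) (vadd c d) = vadd (vadd a c) (vadd b d).
Proof. rewrite !vadd_assoc. f_equal. rewrite <- !vadd_assoc. f_equal. apply vadd_comm. Qed.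

Lemma vopp_add x y : vopp (vadd x y) = vadd (vopp x) (vopp y).
Proof. rewrite !vopp_scal; apply vscal_distr_v. Qed.

Lemma vaddKl x y : vadd (vadd x y) (vopp x) = y.
Proof. rewrite (vadd_comm x y), <- vadd_assoc, vadd_opp, vadd_0; reflexivity. Qed.

Lemma vnorm_sub_sym x y : vnorm (vadd x (vopp y)) = vnorm (vadd y (vopp x)).
Proof.
  rewrite <- vnorm_opp, vopp_add, !vopp_scal, vscal_assoc.
  replace (-1 * -1) with 1 by ring. rewrite vscal_1. apply f_equal, vadd_comm.
Qed.

Lemma vnorm_sub_triangle x y z :
  vnorm (vadd x (vopp z)) <= vnorm (vadd x (vopp y)) + vnorm (vadd y (vopp z)).
Proof.
  eapply Rle_trans; [| apply vnorm_triangle]. right. f_equal.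
  rewrite <- (vadd_assoc x (vopp y)), (vadd_assoc (vopp y) y), (vadd_comm (vopp y) y), vadd_opp, vadd_0l.
  reflexivity.
Qed.

Lemma vnorm_sub_ge x y : vnorm x - vnorm y <= vnorm (vadd x (vopp y)).
Proof.
  pose proof (vnorm_triangle (vadd x (vopp y)) y) as H.
  rewrite <- vadd_assoc, (vadd_comm (vopp y) y), vadd_opp, vadd_0 in H. lra.
Qed.

End VectorAlgebra.

(** [rsum n a = a 0 + ... + a (n-1)] has [n] terms, like [vsum]; Stdlib's [sum_f_R0 a n] has [n+1]. *)
Fixpoint rsum (n : nat) (a : nat -> R) : R :=
  match n with O => 0 | S m => rsum m a + a m end.

Lemma sum_f_R0_rsum (a : nat -> R) (j : nat) : sum_f_R0 a j = rsum (S j) a.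
Proof. induction j; simpl in *; [ring | rewrite IHj; ring]. Qed.

Lemma rsum_ext n a b : (forall i, (i < n)%nat -> a i = b i) -> rsum n a = rsum n b.
Proof.
  induction n; simpl; intros H; [reflexivity|].
  rewrite IHn, H by (first [lia | intros; apply H; lia]). reflexivity.
Qed.

Lemma rsum_le n a b : (forall i, (i < n)%nat -> a i <= b i) -> rsum n a <= rsum n b.
Proof.
  induction n; simpl; intros H; [lra|].
  assert (a n <= b n) by (apply H; lia). assert (rsum n a <= rsum n b) by (apply IHn; intros; apply H; lia). lra.
Qed.

Lemma rsum_add n a b : rsum n (fun i => a i + b i) = rsum n a + rsum n b.
Proof. induction n; simpl; [ring|]. rewrite IHn; ring. Qed.

Lemma rsum_scal n c a : rsum n (fun i => c * a i) = c * rsum n a.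
Proof. induction n; simpl; [ring|]. rewrite IHn; ring. Qed.

Lemma rsum_zero n a : (forall i, (i < n)%nat -> a i = 0) -> rsum n a = 0.
Proof.
  induction n; simpl; intros H; [reflexivity|].
  rewrite IHn, H by (first [lia | intros; apply H; lia]). ring.
Qed.

Lemma rsum_split m n a : rsum (m + n) a = rsum m a + rsum n (fun i => a (m + i)%nat).
Proof. induction n; simpl; [rewrite Nat.add_0_r; ring|]. rewrite Nat.add_succ_r; simpl; rewrite IHn; ring. Qed.

Lemma rsum_split_le a b g : (a <= b)%nat -> rsum b g = rsum a g + rsum (b - a) (fun i => g (a + i)%nat).
Proof. intro H. rewrite <- rsum_split. f_equal. lia. Qed.

Lemma rsum_extend n N a : (n <= N)%nat -> (forall i, (n <= i)%nat -> a i = 0) -> rsum N a = rsum n a.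
Proof.
  intros H Z. rewrite (rsum_split_le n N a H), (rsum_zero _ (fun i => a (n + i)%nat)); [ring|].
  intros; apply Z; lia.
Qed.

Section VectorSums.
Context {V : BanachSpace}.
Implicit Types a b : nat -> V.

Lemma vsum_ext n a b : (forall i, (i < n)%nat -> a i = b i) -> vsum n a = vsum n b.
Proof.
  induction n; simpl; intros H; [reflexivity|].
  rewrite IHn, H by (first [lia | intros; apply H; lia]). reflexivity.
Qed.

Lemma vsum_add n a b : vsum n (fun i => vadd (a i) (b i)) = vadd (vsum n a) (vsum n b).
Proof. induction n; simpl; [rewrite vadd_0; reflexivity|]. rewrite IHn. apply vadd_ACA. Qed.

Lemma vsum_scal n c a : vsum n (fun i => vscal c (a i)) = vscal c (vsum n a).
Proof. induction n; simpl; [rewrite vscal_v0; reflexivity|]. rewrite IHn, vscal_distr_v; reflexivity. Qed.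

Lemma vsum_zero n a : (forall i, (i < n)%nat -> a i = vzero) -> vsum n a = vzero.
Proof.
  induction n; simpl; intros H; [reflexivity|].
  rewrite IHn, H by (first [lia | intros; apply H; lia]). apply vadd_0.
Qed.

Lemma vsum_split m n a : vsum (m + n) a = vadd (vsum m a) (vsum n (fun i => a (m + i)%nat)).
Proof.
  induction n; simpl; [rewrite Nat.add_0_r, vadd_0; reflexivity|].
  rewrite Nat.add_succ_r; simpl; rewrite IHn, vadd_assoc; reflexivity.
Qed.

Lemma vsum_split_le m n a : (m <= n)%nat -> vsum n a = vadd (vsum m a) (vsum (n - m) (fun i => a (m + i)%nat)).
Proof. intro H. rewrite <- vsum_split. f_equal. lia. Qed.

Lemma vsum_extend n N a : (n <= N)%nat -> (forall i, (n <= i)%nat -> a i = vzero) -> vsum N a = vsum n a.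
Proof.
  intros H Z. rewrite (vsum_split_le n N a H), (vsum_zero _ (fun i => a (n + i)%nat)); [apply vadd_0|].
  intros; apply Z; lia.
Qed.

Lemma vnorm_vsum n a : vnorm (vsum n a) <= rsum n (fun i => vnorm (a i)).
Proof. induction n; simpl; [rewrite vnorm_0; lra|]. eapply Rle_trans; [apply vnorm_triangle | lra]. Qed.

End VectorSums.

(** * The Hahn-Banach theorem *)

Definition is_chain {X : Type} (le : X -> X -> Prop) (C : X -> Prop) :=
  forall x y, C x -> C y -> le x y \/ le y x.

Definition tower {X : Type} (le : X -> X -> Prop) (sup : (X -> Prop) -> X) (f : X -> X) (a x : X) :=
  forall A : X -> Prop, A a -> (forall y, A y -> A (f y)) ->
    (forall C, is_chain le C -> (exists y, C y) -> (forall y, C y -> A y) -> A (sup C)) -> A x.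

Section BourbakiWitt.
Context {X : Type}.
Variables (le : X -> X -> Prop) (sup : (X -> Prop) -> X) (f : X -> X) (a : X).
Hypothesis refl : forall x, le x x.
Hypothesis trans : forall x y z, le x y -> le y z -> le x z.
Hypothesis anti : forall x y, le x y -> le y x -> x = y.
Hypothesis sup_ub : forall C y, C y -> le y (sup C).
Hypothesis sup_lub : forall C u, (forall y, C y -> le y u) -> le (sup C) u.
Hypothesis infl : forall x, le x (f x).

Let M := tower le sup f a.

Lemma tower_base : M a.
Proof. intros A H1 H2 H3; exact H1. Qed.

Lemma tower_step y : M y -> M (f y).
Proof. intros Hy A H1 H2 H3; apply H2, Hy; auto. Qed.

Lemma tower_sup C : is_chain le C -> (exists y, C y) -> (forall y, C y -> M y) -> M (sup C).
Proof. intros HC HE HCM A H1 H2 H3. apply H3; auto. intros y Cy; apply HCM; auto. Qed.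

Lemma tower_above_base x : M x -> le a x.
Proof.
  intros Mx. apply (Mx (fun x => le a x)); auto.
  - intros y Hy. eapply trans; eauto.
  - intros C _ [y Cy] HC. eapply trans; [apply HC, Cy | apply sup_ub, Cy].
Qed.

Definition extreme c := forall x, M x -> le x c -> x <> c -> le (f x) c.

Lemma extreme_split c : M c -> extreme c -> forall x, M x -> le x c \/ le (f c) x.
Proof.
  intros Mc Ec x Mx. apply (Mx (fun x => M x /\ (le x c \/ le (f c) x))).
  - split; [apply tower_base | left; apply tower_above_base; auto].
  - intros y [My [H | H]]; (split; [apply tower_step; auto|]).
    + destruct (classic (y = c)) as [-> | E]; [right; apply refl | left; apply Ec; auto].
    + right; eapply trans; eauto.
  - intros C HC HE HCy. split; [apply tower_sup; auto; intros y Cy; apply HCy; auto|].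
    destruct (classic (forall y, C y -> le y c)) as [Hall | Hn]; [left; apply sup_lub; auto|].
    apply not_all_ex_not in Hn. destruct Hn as [y Hy]. apply imply_to_and in Hy. destruct Hy as [Cy Hy].
    destruct (HCy y Cy) as [_ [H | H]]; [contradiction|].
    right; eapply trans; [apply H | apply sup_ub, Cy].
Qed.

Lemma tower_extreme c : M c -> extreme c.
Proof.
  intros Mc. apply (Mc (fun c => M c /\ extreme c)).
  - split; [apply tower_base|]. intros x Mx Hx Hne. exfalso; apply Hne, anti; auto. apply tower_above_base; auto.
  - intros y [My Ey]. split; [apply tower_step; auto|]. intros x Mx Hx Hne.
    destruct (extreme_split y My Ey x Mx) as [H | H].
    + destruct (classic (x = y)) as [-> | E]; [apply refl|].
      eapply trans; [apply Ey; auto | apply infl].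
    + exfalso; apply Hne, anti; auto.
  - intros C HC HE HCy. assert (Msup : M (sup C)) by (apply tower_sup; auto; intros; apply HCy; auto).
    split; auto. intros x Mx Hx Hne.
    destruct (classic (forall d, C d -> le (f d) x)) as [Hall | Hn].
    + exfalso; apply Hne, anti; auto. apply sup_lub. intros y Cy. eapply trans; [apply infl | apply Hall, Cy].
    + apply not_all_ex_not in Hn. destruct Hn as [d Hd]. apply imply_to_and in Hd. destruct Hd as [Cd Hd].
      destruct (HCy d Cd) as [Md Ed].
      destruct (extreme_split d Md Ed x Mx) as [H | H]; [|contradiction].
      destruct (classic (x = d)) as [-> | E].
      * destruct (extreme_split d Md Ed (sup C) Msup) as [H2 | H2]; auto.
        exfalso; apply Hne, anti; auto.
      * eapply trans; [apply Ed; auto | apply sup_ub, Cd].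
Qed.

Lemma tower_is_chain : is_chain le M.
Proof.
  intros x y Mx My. destruct (extreme_split y My (tower_extreme y My) x Mx) as [H | H]; auto.
  right; eapply trans; [apply infl | apply H].
Qed.

Theorem bourbaki_witt : exists s, tower le sup f a s /\ f s = s.
Proof.
  assert (Msup : M (sup M)) by (apply tower_sup; [apply tower_is_chain | exists a; apply tower_base | auto]).
  exists (sup M). split; [exact Msup|]. apply anti; [apply sup_ub, tower_step, Msup | apply infl].
Qed.

End BourbakiWitt.

Definition dual_ball (V : BanachSpace) (f : V -> R) : Prop :=
  (forall x y, f (vadd x y) = f x + f y) /\ (forall a x, f (vscal a x) = a * f x) /\
  (forall x, Rabs (f x) <= vnorm x).

Section HahnBanach.
Context {V : BanachSpace}.
Implicit Types x y z : V.

Lemma dual_ball_dual f : dual_ball V f -> is_dual_functional V f.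
Proof. intros [A [B C]]. split; [|split]; auto. exists 1. intros; rewrite Rmult_1_l; auto. Qed.

Lemma linear_0 (f : V -> R) : (forall a x, f (vscal a x) = a * f x) -> f vzero = 0.
Proof. intro H. rewrite <- (vscal_0 vzero), H; ring. Qed.

Lemma linear_vsum (f : V -> R) : (forall x y, f (vadd x y) = f x + f y) ->
  (forall a x, f (vscal a x) = a * f x) -> forall n a, f (vsum n a) = rsum n (fun i => f (a i)).
Proof. intros Ha Hs n a; induction n; simpl; [apply linear_0; auto|]. rewrite Ha, IHn; reflexivity. Qed.

Lemma dual_ball_opp f x : dual_ball V f -> f (vopp x) = - f x.
Proof. intros [_ [FS _]]. rewrite vopp_scal, FS; ring. Qed.

Lemma vscal_sub_eq x y z t s :
  vadd x (vscal t z) = vadd y (vscal s z) -> vscal (t - s) z = vadd y (vscal (-1) x).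
Proof.
  intro E. assert (E' : vadd (vadd x (vscal t z)) (vadd (vscal (-1) x) (vscal (-s) z)) =
                        vadd (vadd y (vscal s z)) (vadd (vscal (-1) x) (vscal (-s) z)))
    by (rewrite E; reflexivity).
  rewrite (vadd_ACA x), (vadd_ACA y), <- !vscal_distr_r in E'.
  replace (s + - s) with 0 in E' by ring. rewrite vscal_0, vadd_0 in E'.
  rewrite <- E'. replace (vscal (t - s) z) with (vadd (vscal (1 + -1) x) (vscal (t + - s) z)).
  - rewrite vscal_distr_r, vscal_1. reflexivity.
  - replace (1 + -1) with 0 by ring. rewrite vscal_0, vadd_0l. reflexivity.
Qed.

Definition dominated_graph (x0 : V) (G : V -> R -> Prop) : Prop :=
  (forall a r s, G a r -> G a s -> r = s) /\
  (forall a b r s, G a r -> G b s -> G (vadd a b) (r + s)) /\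
  (forall a r t, G a r -> G (vscal t a) (t * r)) /\
  (forall a r, G a r -> r <= vnorm a) /\
  G x0 (vnorm x0).

Definition admissible_value (G : V -> R -> Prop) z (c : R) : Prop :=
  (forall d gd, G d gd -> gd - vnorm (vadd d (vopp z)) <= c) /\
  (forall d gd, G d gd -> c <= vnorm (vadd d z) - gd).

Definition graph_extend (G : V -> R -> Prop) z (c : R) : V -> R -> Prop :=
  fun a r => exists d gd t, G d gd /\ a = vadd d (vscal t z) /\ r = gd + t * c.

Lemma dominated_graph_0 x0 G : dominated_graph x0 G -> G vzero 0.
Proof.
  intros [_ [_ [Hs [_ Hx]]]]. rewrite <- (vscal_0 x0). replace 0 with (0 * vnorm x0) at 2 by ring. auto.
Qed.

Lemma admissible_value_exists x0 G z : dominated_graph x0 G -> exists c, admissible_value G z c.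
Proof.
  intros HV. pose proof HV as [_ [Ha [_ [Hb _]]]].
  assert (key : forall d1 g1 d2 g2, G d1 g1 -> G d2 g2 ->
                g1 - vnorm (vadd d1 (vopp z)) <= vnorm (vadd d2 z) - g2).
  { intros d1 g1 d2 g2 H1 H2. pose proof (Hb _ _ (Ha _ _ _ _ H1 H2)) as H.
    replace (vadd d1 d2) with (vadd (vadd d1 (vopp z)) (vadd d2 z)) in H
      by (rewrite vadd_ACA, (vadd_comm (vopp z) z), vadd_opp, vadd_0; reflexivity).
    pose proof (vnorm_triangle (vadd d1 (vopp z)) (vadd d2 z)). lra. }
  pose proof (dominated_graph_0 x0 G HV) as G0.
  set (E := fun e => exists d gd, G d gd /\ e = gd - vnorm (vadd d (vopp z))).
  destruct (completeness E) as [c [Hub Hlub]].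
  - exists (vnorm (vadd vzero z) - 0). intros e [d [gd [H ->]]]. apply key; auto.
  - exists (0 - vnorm (vadd vzero (vopp z))), vzero, 0. auto.
  - exists c. split.
    + intros d gd H. apply Hub. exists d, gd; auto.
    + intros d gd H. apply Hlub. intros e [d1 [g1 [H1 ->]]]. apply key; auto.
Qed.

(* For t <> 0, scaling reduces the bound at [d + t z] to the admissible-value inequality at [d / t]. *)
Lemma graph_extend_bounded x0 G z c : dominated_graph x0 G ->
  admissible_value G z c -> forall a r, graph_extend G z c a r -> r <= vnorm a.
Proof.
  intros [_ [_ [Hs [Hb _]]]] [Hc1 Hc2] a r [d [gd [t [H1 [-> ->]]]]].
  destruct (Rtotal_order t 0) as [Hlt | [-> | Hgt]].
  - set (s := - t). assert (Hsp : 0 < s) by (unfold s; lra).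
    specialize (Hc1 _ _ (Hs _ _ (/ s) H1)).
    assert (E : vscal s (vadd (vscal (/ s) d) (vopp z)) = vadd d (vscal t z)).
    { rewrite vscal_distr_v, vscal_assoc, vopp_scal, vscal_assoc.
      replace (s * / s) with 1 by (field; lra). rewrite vscal_1. do 2 f_equal. unfold s; ring. }
    rewrite <- E, vnorm_scal, Rabs_right by lra.
    assert (s * (/ s * gd - vnorm (vadd (vscal (/ s) d) (vopp z))) <= s * c) by (apply Rmult_le_compat_l; lra).
    replace (s * (/ s * gd - vnorm (vadd (vscal (/ s) d) (vopp z))))
      with (gd - s * vnorm (vadd (vscal (/ s) d) (vopp z))) in H by (field; lra).
    unfold s in *. lra.
  - rewrite vscal_0, vadd_0, Rmult_0_l, Rplus_0_r. auto.
  - specialize (Hc2 _ _ (Hs _ _ (/ t) H1)).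
    assert (E : vscal t (vadd (vscal (/ t) d) z) = vadd d (vscal t z)).
    { rewrite vscal_distr_v, vscal_assoc. replace (t * / t) with 1 by (field; lra). rewrite vscal_1. reflexivity. }
    rewrite <- E, vnorm_scal, Rabs_right by lra.
    assert (t * c <= t * (vnorm (vadd (vscal (/ t) d) z) - / t * gd)) by (apply Rmult_le_compat_l; lra).
    replace (t * (vnorm (vadd (vscal (/ t) d) z) - / t * gd)) with (t * vnorm (vadd (vscal (/ t) d) z) - gd) in H
      by (field; lra).
    lra.
Qed.

Lemma graph_extend_dominated x0 G z c : dominated_graph x0 G -> (forall r, ~ G z r) ->
  admissible_value G z c -> dominated_graph x0 (graph_extend G z c).
Proof.
  intros HV Hz Hc. pose proof HV as [Hf [Ha [Hs [Hb Hx]]]].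
  split; [|split; [|split; [|split]]].
  - intros a r s [d [gd [t [H1 [-> ->]]]]] [d' [gd' [t' [H1' [E ->]]]]].
    destruct (Req_dec t t') as [<- | Et].
    + assert (d = d') as <- by (apply (vadd_cancel (vscal t z)); rewrite !(vadd_comm (vscal t z)); exact E).
      rewrite (Hf _ _ _ H1 H1'); reflexivity.
    + exfalso. apply vscal_sub_eq in E.
      assert (Hd : G (vadd d' (vscal (-1) d)) (gd' + (-1) * gd)) by (apply Ha; auto).
      apply (Hz (/ (t - t') * (gd' + -1 * gd))).
      replace z with (vscal (/ (t - t')) (vadd d' (vscal (-1) d))); [apply Hs; auto|].
      rewrite <- E, vscal_assoc. replace (/ (t - t') * (t - t')) with 1 by (field; lra). apply vscal_1.
  - intros a b r s [d [gd [t [H1 [-> ->]]]]] [d' [gd' [t' [H1' [-> ->]]]]].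
    exists (vadd d d'), (gd + gd'), (t + t'). split; [auto|split; [|ring]].
    rewrite vadd_ACA, vscal_distr_r; reflexivity.
  - intros a r u [d [gd [t [H1 [-> ->]]]]]. exists (vscal u d), (u * gd), (u * t).
    split; [auto|split; [|ring]]. rewrite vscal_distr_v, vscal_assoc; reflexivity.
  - eapply graph_extend_bounded; eauto.
  - exists x0, (vnorm x0), 0. split; [auto|split; [|ring]]. rewrite vscal_0, vadd_0; reflexivity.
Qed.

Lemma dominated_graph_line x0 : dominated_graph x0 (fun a r => exists t, a = vscal t x0 /\ r = t * vnorm x0).
Proof.
  split; [|split; [|split; [|split]]].
  - intros a r r' [t [-> ->]] [t' [E ->]].
    destruct (Req_dec (vnorm x0) 0) as [N0 | N0]; [rewrite N0; ring|].
    destruct (Req_dec t t') as [-> | Et]; [reflexivity|]. exfalso.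
    assert (E' : vadd vzero (vscal t x0) = vadd vzero (vscal t' x0)) by (rewrite !vadd_0l; auto).
    apply vscal_sub_eq in E'. rewrite vscal_v0, vadd_0 in E'.
    apply (f_equal vnorm) in E'. rewrite vnorm_scal, vnorm_0 in E'.
    apply Rmult_integral in E' as [E' | E']; [apply (Rabs_no_R0 (t - t')); lra | contradiction].
  - intros a b r r' [t [-> ->]] [t' [-> ->]]. exists (t + t'). split; [symmetry; apply vscal_distr_r | ring].
  - intros a r u [t [-> ->]]. exists (u * t). split; [apply vscal_assoc | ring].
  - intros a r [t [-> ->]]. rewrite vnorm_scal. apply Rmult_le_compat_r; [apply vnorm_nonneg | apply Rle_abs].
  - exists 1. split; [rewrite vscal_1 | ring]; reflexivity.
Qed.

Lemma dominated_graph_chain_union x0 (C : (V -> R -> Prop) -> Prop) :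
  is_chain (fun G H => forall a r, G a r -> H a r) C -> (exists G, C G) ->
  (forall G, C G -> dominated_graph x0 G) ->
  dominated_graph x0 (fun a r => exists G, C G /\ G a r).
Proof.
  intros HC [G0 CG0] HCV. split; [|split; [|split; [|split]]].
  - intros a r r' [G1 [C1 H1]] [G2 [C2 H2]].
    destruct (HC G1 G2 C1 C2) as [L | L]; [apply (proj1 (HCV G2 C2) a) | apply (proj1 (HCV G1 C1) a)]; auto.
  - intros a b r r' [G1 [C1 H1]] [G2 [C2 H2]]. destruct (HC G1 G2 C1 C2) as [L | L].
    + exists G2; split; auto. apply (proj1 (proj2 (HCV G2 C2))); auto.
    + exists G1; split; auto. apply (proj1 (proj2 (HCV G1 C1))); auto.
  - intros a r t [G1 [C1 H1]]. exists G1; split; auto. apply (HCV G1 C1); auto.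
  - intros a r [G1 [C1 H1]]. apply (HCV G1 C1); auto.
  - exists G0; split; auto. apply (HCV G0 CG0).
Qed.

Lemma dominated_graph_total x0 G : dominated_graph x0 G -> (forall a, exists r, G a r) ->
  exists f, dual_ball V f /\ f x0 = vnorm x0.
Proof.
  intros [Hf [Ha [Hs [Hb Hx]]]] Tot.
  destruct (choice G Tot) as [f HF].
  exists f. split; [split; [|split]|].
  - intros x y. apply (Hf (vadd x y)); auto.
  - intros t x. apply (Hf (vscal t x)); auto.
  - intros x. apply Rabs_le. split; [|auto].
    pose proof (Hb _ _ (Hs _ _ (-1) (HF x))) as H. rewrite <- vopp_scal, vnorm_opp in H. lra.
  - apply (Hf x0); auto.
Qed.

(* Bourbaki–Witt applied to the map extending a non-total graph by one admissible value. *)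
Theorem hahn_banach x0 : exists f, dual_ball V f /\ f x0 = vnorm x0.
Proof.
  set (X := V -> R -> Prop).
  set (le := fun G H : X => forall a r, G a r -> H a r).
  set (cond := fun G : X => dominated_graph x0 G /\ exists z, forall r, ~ G z r).
  set (zpick := fun G : X => epsilon (inhabits x0) (fun z => forall r, ~ G z r)).
  set (cpick := fun G : X => epsilon (inhabits 0) (fun c => admissible_value G (zpick G) c)).
  set (grow := fun G : X => if excluded_middle_informative (cond G)
                             then graph_extend G (zpick G) (cpick G) else G).
  assert (Hz : forall G, cond G -> forall r, ~ G (zpick G) r).
  { intros G [_ HE]. apply (epsilon_spec (inhabits x0) (fun z => forall r, ~ G z r) HE). }
  assert (Hc : forall G, cond G -> admissible_value G (zpick G) (cpick G)).
  { intros G [HV _]. apply (epsilon_spec (inhabits 0) (fun c => admissible_value G (zpick G) c)).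
    eapply admissible_value_exists; eauto. }
  assert (grow_dominated : forall G, dominated_graph x0 G -> dominated_graph x0 (grow G)).
  { intros G HV. unfold grow. destruct (excluded_middle_informative (cond G)); auto.
    apply graph_extend_dominated; auto. }
  destruct (bourbaki_witt le (fun C a r => exists G, C G /\ G a r) grow
              (fun a r => exists t, a = vscal t x0 /\ r = t * vnorm x0)) as [s [Ts Fs]].
  - intros x a r; auto.
  - intros x y z H1 H2 a r H; auto.
  - intros x y H1 H2. apply functional_extensionality; intro a. apply functional_extensionality; intro r.
    apply propositional_extensionality; split; auto.
  - intros C y Cy a r H. exists y; auto.
  - intros C u H a r [G [CG HG]]. apply (H G CG); auto.
  - intros G a r H. unfold grow. destruct (excluded_middle_informative (cond G)); auto.
    exists a, r, 0. split; [auto | split; [|ring]]. rewrite vscal_0, vadd_0; reflexivity.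
  - assert (Vs : dominated_graph x0 s).
    { apply (Ts (dominated_graph x0)); [apply dominated_graph_line | exact grow_dominated |].
      intros C HC HE HCV. apply dominated_graph_chain_union; auto. }
    apply (dominated_graph_total x0 s Vs). intro a. apply NNPP; intro Hn.
    assert (HC : cond s) by (split; auto; exists a; intros r Hr; apply Hn; exists r; auto).
    apply (Hz s HC (cpick s)).
    assert (Hg : grow s (zpick s) (cpick s)).
    { unfold grow. destruct (excluded_middle_informative (cond s)); [|contradiction].
      exists vzero, 0, 1. split; [eapply dominated_graph_0; eauto | split; [|ring]].
      rewrite vscal_1, vadd_0l; reflexivity. }
    rewrite Fs in Hg. exact Hg.
Qed.

Definition norming (x : V) : V -> R :=
  epsilon (inhabits (fun _ : V => 0)) (fun f => dual_ball V f /\ f x = vnorm x).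

Lemma norming_spec x : dual_ball V (norming x) /\ norming x x = vnorm x.
Proof.
  apply (epsilon_spec (inhabits (fun _ : V => 0)) (fun f => dual_ball V f /\ f x = vnorm x)), hahn_banach.
Qed.

End HahnBanach.

(** * Weakly null sequences have bounded subsequences *)

Lemma Un_cv_le_eventually (u : nat -> R) l c N : Un_cv u l -> (forall n, (n >= N)%nat -> u n <= c) -> l <= c.
Proof.
  intros H B. apply Rnot_lt_le; intro Hlt. destruct (H (l - c)) as [N1 HN]; [lra|].
  specialize (HN (max N N1) ltac:(lia)). specialize (B (max N N1) ltac:(lia)).
  unfold Rdist in HN. apply Rabs_def2 in HN. lra.
Qed.

Lemma Un_cv_ge_eventually (u : nat -> R) l c N : Un_cv u l -> (forall n, (n >= N)%nat -> c <= u n) -> c <= l.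
Proof.
  intros H B. apply Rnot_lt_le; intro Hlt. destruct (H (c - l)) as [N1 HN]; [lra|].
  specialize (HN (max N N1) ltac:(lia)). specialize (B (max N N1) ltac:(lia)).
  unfold Rdist in HN. apply Rabs_def2 in HN. lra.
Qed.

Lemma Un_cv_close (u : nat -> R) l b N : Un_cv u l -> (forall n, (n >= N)%nat -> Rabs (u n - u N) <= b) ->
  Rabs (l - u N) <= b.
Proof.
  intros H B. apply Rabs_le.
  assert (Bn : forall n, (n >= N)%nat -> u N - b <= u n /\ u n <= u N + b)
    by (intros n Hn; pose proof (Rabs_le_bounds _ _ (B n Hn)); lra).
  assert (u N - b <= l) by (apply (Un_cv_ge_eventually u l _ N H); intros; apply Bn; auto).
  assert (l <= u N + b) by (apply (Un_cv_le_eventually u l _ N H); intros; apply Bn; auto).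
  lra.
Qed.

Lemma inv3_pow_pos j : 0 < (/3)^j.
Proof. apply pow_lt; lra. Qed.

Section DualSeries.
Context {V : BanachSpace}.
Variables (fs : nat -> V -> R) (gs : nat -> V -> R).
Hypothesis fs_dual : forall j, dual_ball V (fs j).
Hypothesis gs_0 : forall x, gs O x = 0.
Hypothesis gs_S : forall j x, gs (S j) x = gs j x + (/3)^j * fs j x.

Lemma dual_series_tail j J x : (j <= J)%nat -> Rabs (gs J x - gs j x) <= 3/2 * (/3)^j * vnorm x.
Proof.
  intro HJ. replace J with (j + (J - j))%nat by lia. generalize (J - j)%nat as k.
  assert (Hx := vnorm_nonneg x).
  enough (forall k, Rabs (gs (j + k)%nat x - gs j x) <= 3/2 * ((/3)^j - (/3)^(j+k)) * vnorm x)
    by (intro k; pose proof (inv3_pow_pos (j + k)); specialize (H k); nra).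
  induction k.
  - rewrite Nat.add_0_r, Rminus_diag, Rabs_R0. lra.
  - rewrite Nat.add_succ_r, gs_S.
    replace (gs (j + k)%nat x + (/ 3) ^ (j + k) * fs (j + k)%nat x - gs j x)
      with ((gs (j + k)%nat x - gs j x) + (/ 3) ^ (j + k) * fs (j + k)%nat x) by ring.
    eapply Rle_trans; [apply Rabs_triang|].
    rewrite Rabs_mult, (Rabs_right ((/3)^(j+k))) by (apply Rle_ge, Rlt_le, inv3_pow_pos).
    destruct (fs_dual (j + k)%nat) as [_ [_ Hb]]. specialize (Hb x).
    assert ((/3)^(j+k) * Rabs (fs (j + k)%nat x) <= (/3)^(j+k) * vnorm x)
      by (apply Rmult_le_compat_l; [apply Rlt_le, inv3_pow_pos | auto]).
    simpl pow. nra.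
Qed.

Lemma dual_series_cauchy x : Cauchy_crit (fun J => gs J x).
Proof.
  intros eps He. assert (Hx := vnorm_nonneg x).
  destruct (pow_lt_1_zero (/3) ltac:(rewrite Rabs_right; lra) (eps / (3 * (vnorm x + 1)))) as [N HN].
  { apply Rdiv_lt_0_compat; lra. }
  exists N. intros n m Hn Hm. unfold Rdist.
  specialize (HN N ltac:(lia)). rewrite Rabs_right in HN by (apply Rle_ge, Rlt_le, inv3_pow_pos).
  pose proof (Rabs_le_bounds _ _ (dual_series_tail N n x Hn)).
  pose proof (Rabs_le_bounds _ _ (dual_series_tail N m x Hm)).
  assert (3 * (/3)^N * vnorm x < eps).
  { pose proof (inv3_pow_pos N).
    apply Rmult_lt_compat_r with (r := 3 * (vnorm x + 1)) in HN; [|lra].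
    unfold Rdiv in HN. rewrite Rmult_assoc, Rinv_l, Rmult_1_r in HN by lra. nra. }
  apply Rabs_def1; lra.
Qed.

Lemma dual_series_linear J :
  (forall x y, gs J (vadd x y) = gs J x + gs J y) /\ (forall a x, gs J (vscal a x) = a * gs J x).
Proof.
  induction J as [|J [IA IS]]; [split; intros; rewrite !gs_0; ring|].
  destruct (fs_dual J) as [FA [FS _]]. split; intros; rewrite !gs_S, ?IA, ?IS, ?FA, ?FS; ring.
Qed.

Lemma dual_series_limit : exists f, is_dual_functional V f /\
  forall j x, Rabs (f x - gs j x) <= 3/2 * (/3)^j * vnorm x.
Proof.
  set (f := fun x => proj1_sig (R_complete _ (dual_series_cauchy x))).
  assert (Hf : forall x, Un_cv (fun J => gs J x) (f x)) by (intro x; apply (proj2_sig (R_complete _ _))).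
  exists f. split; [split; [|split]|].
  - intros x y. apply (UL_sequence (fun J => gs J (vadd x y))); auto.
    replace (fun J => gs J (vadd x y)) with (fun J => gs J x + gs J y); [apply CV_plus; auto|].
    apply functional_extensionality; intro J; symmetry; apply (proj1 (dual_series_linear J)).
  - intros a x. apply (UL_sequence (fun J => gs J (vscal a x))); auto.
    replace (fun J => gs J (vscal a x)) with (fun J => (fun _ => a) J * gs J x).
    + apply CV_mult; auto. intros e He; exists O; intros; unfold Rdist; rewrite Rminus_diag, Rabs_R0; lra.
    + apply functional_extensionality; intro J; symmetry; apply (proj2 (dual_series_linear J)).
  - exists (3/2). intro x.
    assert (H := Un_cv_close _ _ _ O (Hf x) (fun n _ => dual_series_tail O n x ltac:(lia))).
    cbv beta in H. rewrite gs_0, Rminus_0_r in H. simpl in H. lra.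
  - intros j x. apply (Un_cv_close _ _ _ j (Hf x)). intros n Hn. apply dual_series_tail; lia.
Qed.

End DualSeries.

Section BoundedSubsequence.
Context {V : BanachSpace}.
Variable v : nat -> V.

Definition hump_index (j : nat) (g : V -> R) (n : nat) : Prop :=
  (j <= n)%nat /\ Rabs (g (v n)) <= 1 /\ 4 * 3^j <= vnorm (v n).

Definition pick_index (j : nat) (g : V -> R) : nat := epsilon (inhabits 0%nat) (hump_index j g).

Fixpoint hump_functional (j : nat) : V -> R :=
  match j with
  | O => fun _ => 0
  | S j => fun x => hump_functional j x + (/3)^j * norming (v (pick_index j (hump_functional j))) x
  end.

Lemma hump_functional_dual j : is_dual_functional V (hump_functional j).
Proof.
  induction j as [|j [IA [IS [C IC]]]]; simpl.
  - split; [intros; ring | split; [intros; ring | exists 0; intros; rewrite Rabs_R0; lra]].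
  - destruct (norming_spec (v (pick_index j (hump_functional j)))) as [[FA [FS FB]] _].
    split; [intros x y; rewrite IA, FA; ring | split; [intros a x; rewrite IS, FS; ring|]].
    exists (Rabs C + (/3)^j). intro x. eapply Rle_trans; [apply Rabs_triang|].
    rewrite Rabs_mult, (Rabs_right ((/3)^j)) by (apply Rle_ge, Rlt_le, inv3_pow_pos).
    specialize (IC x). specialize (FB x). pose proof (inv3_pow_pos j). pose proof (vnorm_nonneg x).
    assert (C * vnorm x <= Rabs C * vnorm x) by (apply Rmult_le_compat_r; [auto | apply Rle_abs]). nra.
Qed.

(* If no bound holds along a subsequence, the humps [3^-j f_j] sum to a functional f with
   f (v_(n_j)) >= 3^-j |v_(n_j)| / 2 - 1 >= 1, contradicting weak nullity. *)
Lemma weakly_null_bounded_subseq : weakly_null V v ->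
  exists M, forall N, exists n, (n >= N)%nat /\ vnorm (v n) <= M.
Proof.
  intro hv. apply NNPP; intro Hn.
  assert (Hbig : forall M, exists N, forall n, (n >= N)%nat -> M < vnorm (v n)).
  { intro M. apply NNPP; intro H1. apply Hn. exists M. intro N. apply NNPP; intro H2. apply H1. exists N.
    intros n Hn'. apply Rnot_le_lt. intro H3. apply H2. exists n; auto. }
  set (n_ := fun j => pick_index j (hump_functional j)).
  assert (Pn : forall j, hump_index j (hump_functional j) (n_ j)).
  { intro j. unfold n_, pick_index. apply epsilon_spec.
    destruct (hv _ (hump_functional_dual j) 1 ltac:(lra)) as [N1 HN1]. destruct (Hbig (4 * 3^j)) as [N2 HN2].
    exists (max j (max N1 N2)). split; [lia|split].
    - specialize (HN1 (max j (max N1 N2)) ltac:(lia)). unfold Rdist in HN1. rewrite Rminus_0_r in HN1. lra.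
    - apply Rlt_le, HN2; lia. }
  destruct (dual_series_limit (fun j => norming (v (n_ j))) hump_functional) as [f [Fd Fb]];
    [intro j; apply norming_spec | reflexivity | reflexivity |].
  destruct (hv f Fd 1 ltac:(lra)) as [N HN]. destruct (Pn N) as [P1 [P2 P3]].
  specialize (HN (n_ N) P1). unfold Rdist in HN. rewrite Rminus_0_r in HN.
  specialize (Fb (S N) (v (n_ N))). simpl in Fb.
  rewrite (proj2 (norming_spec _)) in Fb.
  apply Rabs_le_bounds in Fb. apply Rabs_le_bounds in P2. apply Rabs_def2 in HN.
  assert (E : (/3)^N * 3^N = 1) by (rewrite <- Rpow_mult_distr, Rinv_l, pow1; lra).
  assert ((/3)^N * vnorm (v (n_ N)) >= 4) by (pose proof (inv3_pow_pos N); nra).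
  unfold n_ in *. lra.
Qed.

End BoundedSubsequence.

Lemma half_pow_pos K : 0 < (/2)^K.
Proof. apply pow_lt; lra. Qed.

Lemma le_of_le_half_pow (a b B : R) (L0 : nat) : 0 <= B ->
  (forall L, (L0 <= L)%nat -> a <= b + B * (/2)^L) -> a <= b.
Proof.
  intros HB H. apply Rnot_lt_le. intro Hlt.
  destruct (pow_lt_1_zero (/2) ltac:(rewrite Rabs_right; lra) ((a - b) / (B + 1))) as [N HN].
  { apply Rdiv_lt_0_compat; lra. }
  specialize (HN (max N L0) ltac:(lia)). specialize (H (max N L0) ltac:(lia)).
  rewrite Rabs_right in HN by (apply Rle_ge, pow_le; lra).
  apply Rmult_lt_compat_l with (r := B + 1) in HN; [|lra]. unfold Rdiv in HN.
  rewrite <- Rmult_assoc, (Rmult_comm (B+1) (a - b)), Rmult_assoc, Rinv_r, Rmult_1_r in HN by lra.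
  pose proof (pow_le (/2) (max N L0) ltac:(lra)). nra.
Qed.

Definition is_inf (E : R -> Prop) (m : R) :=
  (forall e, E e -> m <= e) /\ (forall m', (forall e, E e -> m' <= e) -> m' <= m).

Lemma is_inf_exists (E : R -> Prop) lb : (forall e, E e -> lb <= e) -> (exists e, E e) -> exists m, is_inf E m.
Proof.
  intros Hlb [e0 He0]. destruct (completeness (fun x => E (- x))) as [s [Hs1 Hs2]].
  - exists (- lb). intros x Hx. specialize (Hlb _ Hx). lra.
  - exists (- e0). rewrite Ropp_involutive; auto.
  - exists (- s). split.
    + intros e He. assert (- e <= s) by (apply Hs1; rewrite Ropp_involutive; auto). lra.
    + intros m' Hm'. assert (s <= - m') by (apply Hs2; intros x Hx; specialize (Hm' _ Hx); lra). lra.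
Qed.

Lemma is_inf_approx E m d : is_inf E m -> 0 < d -> exists e, E e /\ e < m + d.
Proof.
  intros [H1 H2] Hd. apply NNPP; intro Hn. assert (m + d <= m); [|lra].
  apply H2. intros e He. apply Rnot_lt_le. intro Hl. apply Hn. exists e; auto.
Qed.

Definition agree (n : nat) (F G : nat -> bool) := forall i, (i < n)%nat -> F i = G i.

(* The maximiser is built bit by bit,
   always keeping the half of the current cylinder with the larger sup. *)
Lemma cantor_attains_sup (Phi : (nat -> bool) -> R) (B : R) :
  (forall F, Phi F <= B) ->
  (forall e, 0 < e -> exists n, forall F F', agree n F F' -> Phi F' <= Phi F + e) ->
  exists Fs, forall F, Phi F <= Phi Fs.
Proof.
  intros HB Hc.
  set (E := fun n G r => exists F', agree n G F' /\ r = Phi F').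
  set (upd := fun (G : nat -> bool) n b i => if Nat.eqb i n then b else G i).
  assert (Ex : forall n G, exists s, is_lub (E n G) s).
  { intros n G. destruct (completeness (E n G)) as [s Hs]; [|exists (Phi G), G; split; auto; intros i _; auto|].
    - exists B. intros r [F' [_ ->]]; auto.
    - exists s; auto. }
  set (s := fun n G => epsilon (inhabits 0) (fun s => is_lub (E n G) s)).
  assert (Hs : forall n G, is_lub (E n G) (s n G))
    by (intros n G; apply (epsilon_spec (inhabits 0) (fun s => is_lub (E n G) s)), Ex).
  assert (Split : forall n G, s n G <= Rmax (s (S n) (upd G n true)) (s (S n) (upd G n false))).
  { intros n G. apply (proj2 (Hs n G)). intros r [F' [Ha ->]].
    assert (Hag : agree (S n) (upd G n (F' n)) F').
    { intros i Hi. unfold upd. destruct (Nat.eqb i n) eqn:Ei.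
      - apply Nat.eqb_eq in Ei; subst; auto.
      - apply Nat.eqb_neq in Ei. apply Ha; lia. }
    assert (H : Phi F' <= s (S n) (upd G n (F' n))) by (apply (proj1 (Hs _ _)); exists F'; auto).
    destruct (F' n); eapply Rle_trans; [apply H | apply Rmax_l | apply H | apply Rmax_r]. }
  set (step := fun n G => if Rle_dec (s (S n) (upd G n false)) (s (S n) (upd G n true))
                          then upd G n true else upd G n false).
  set (prefix := fix prefix n := match n with O => (fun _ => false) | S n => step n (prefix n) end).
  assert (Inv : forall n, s O (fun _ => false) <= s n (prefix n)).
  { induction n; [simpl; lra|]. eapply Rle_trans; [apply IHn|]. eapply Rle_trans; [apply Split|].
    simpl. unfold step. destruct (Rle_dec _ _); [rewrite Rmax_left | rewrite Rmax_right]; lra. }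
  assert (Stab : forall n k i, (i < n)%nat -> prefix (n + k)%nat i = prefix n i).
  { intros n k i Hi. induction k; [rewrite Nat.add_0_r; auto|].
    rewrite Nat.add_succ_r. simpl. unfold step. rewrite <- IHk.
    destruct (Rle_dec _ _); unfold upd;
      replace (Nat.eqb i (n + k)) with false by (symmetry; apply Nat.eqb_neq; lia); auto. }
  set (Fs := fun i => prefix (S i) i).
  assert (AgF : forall n, agree n (prefix n) Fs).
  { intros n i Hi. unfold Fs. replace n with (S i + (n - S i))%nat at 1 by lia. apply Stab. lia. }
  exists Fs. intro F.
  assert (H1 : Phi F <= s O (fun _ => false))
    by (apply (proj1 (Hs _ _)); exists F; split; [intros i Hi; lia | auto]).
  apply Rnot_lt_le. intro Hlt.
  destruct (Hc ((Phi F - Phi Fs)/2) ltac:(lra)) as [n Hn].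
  assert (H2 : s n (prefix n) <= Phi Fs + (Phi F - Phi Fs)/2).
  { apply (proj2 (Hs _ _)). intros r [F' [Ha ->]]. apply Hn. intros i Hi. rewrite <- (AgF n i Hi). auto. }
  specialize (Inv n). lra.
Qed.

Lemma complete_half_pow_limit {V : BanachSpace} (w : nat -> V) (B : R) : 0 <= B ->
  (forall L L', (L <= L')%nat -> vnorm (vadd (w L') (vopp (w L))) <= B * (/2)^L) ->
  exists l, forall L, vnorm (vadd (w L) (vopp l)) <= B * (/2)^L.
Proof.
  intros HB H.
  assert (small : forall e, 0 < e -> exists N, forall n, (n >= N)%nat -> B * (/2)^n < e).
  { intros e He. destruct (pow_lt_1_zero (/2) ltac:(rewrite Rabs_right; lra) (e / (B + 1))) as [N HN].
    { apply Rdiv_lt_0_compat; lra. }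
    exists N. intros n Hn. specialize (HN n Hn). rewrite Rabs_right in HN by (apply Rle_ge, pow_le; lra).
    apply Rmult_lt_compat_l with (r := B + 1) in HN; [|lra]. unfold Rdiv in HN.
    rewrite <- Rmult_assoc, (Rmult_comm (B+1) e), Rmult_assoc, Rinv_r, Rmult_1_r in HN by lra.
    pose proof (pow_le (/2) n ltac:(lra)). nra. }
  destruct (vcomplete w) as [l Hl].
  - intros e He. destruct (small e He) as [N HN]. exists N. intros n m Hn Hm.
    destruct (Nat.le_ge_cases n m) as [Hnm | Hnm]; [rewrite vnorm_sub_sym|];
      (eapply Rle_lt_trans; [apply H; auto | apply HN; auto]).
  - exists l. intro L. apply Rnot_lt_le. intro Hlt.
    destruct (Hl (vnorm (vadd (w L) (vopp l)) - B * (/2)^L) ltac:(lra)) as [N HN].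
    specialize (HN (max N L) ltac:(lia)).
    pose proof (vnorm_sub_triangle (w L) (w (max N L)) l).
    pose proof (H L (max N L) ltac:(lia)) as H2. rewrite vnorm_sub_sym in H2. lra.
Qed.

(** * Subset norms *)

Section SubsetNorm.
Context {V : BanachSpace}.
Variable u : nat -> V.
Implicit Types (y z : nat -> R) (F : nat -> bool).

Definition subset_sum (N : nat) y F : V := vsum N (fun n => if F n then vscal (y n) (u n) else vzero).

Definition subset_norm (N : nat) y : R :=
  epsilon (inhabits 0) (is_lub (fun r => exists F, r = vnorm (subset_sum N y F))).

Lemma subset_norm_spec N y : is_lub (fun r => exists F, r = vnorm (subset_sum N y F)) (subset_norm N y).
Proof.
  unfold subset_norm. apply epsilon_spec. destruct (completeness (fun r => exists F, r = vnorm (subset_sum N y F)))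
    as [p Hp]; [| |exists p; exact Hp].
  - exists (rsum N (fun n => Rabs (y n) * vnorm (u n))). intros r [F ->].
    eapply Rle_trans; [apply vnorm_vsum|]. apply rsum_le. intros i _. destruct (F i).
    + rewrite vnorm_scal; lra.
    + rewrite vnorm_0. pose proof (Rabs_pos (y i)); pose proof (vnorm_nonneg (u i)). nra.
  - exists (vnorm (subset_sum N y (fun _ => true))), (fun _ => true); auto.
Qed.

Lemma subset_norm_ge N y F : vnorm (subset_sum N y F) <= subset_norm N y.
Proof. apply (proj1 (subset_norm_spec N y)). exists F; auto. Qed.

Lemma subset_norm_le N y c : (forall F, vnorm (subset_sum N y F) <= c) -> subset_norm N y <= c.
Proof. intro H. apply (proj2 (subset_norm_spec N y)). intros r [F ->]; auto. Qed.

Lemma subset_norm_nonneg N y : 0 <= subset_norm N y.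
Proof. eapply Rle_trans; [apply (vnorm_nonneg (subset_sum N y (fun _ => true))) | apply subset_norm_ge]. Qed.

Lemma subset_norm_0 y : subset_norm O y = 0.
Proof.
  apply Rle_antisym; [|apply subset_norm_nonneg].
  apply subset_norm_le; intro F; unfold subset_sum; simpl; rewrite vnorm_0; lra.
Qed.

Lemma subset_sum_add N y z F :
  subset_sum N (fun n => y n + z n) F = vadd (subset_sum N y F) (subset_sum N z F).
Proof.
  unfold subset_sum. rewrite <- vsum_add. apply vsum_ext. intros i _.
  destruct (F i); [apply vscal_distr_r | rewrite vadd_0; auto].
Qed.

Lemma subset_sum_scal N t y F : subset_sum N (fun n => t * y n) F = vscal t (subset_sum N y F).
Proof.
  unfold subset_sum. rewrite <- vsum_scal. apply vsum_ext. intros i _.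
  destruct (F i); [rewrite vscal_assoc | rewrite vscal_v0]; auto.
Qed.

Lemma subset_norm_add N y z : subset_norm N (fun n => y n + z n) <= subset_norm N y + subset_norm N z.
Proof.
  apply subset_norm_le. intro F. rewrite subset_sum_add. eapply Rle_trans; [apply vnorm_triangle|].
  pose proof (subset_norm_ge N y F); pose proof (subset_norm_ge N z F); lra.
Qed.

Lemma subset_norm_scal N t y : 0 <= t -> subset_norm N (fun n => t * y n) <= t * subset_norm N y.
Proof.
  intro Ht. apply subset_norm_le. intro F. rewrite subset_sum_scal, vnorm_scal, Rabs_right by lra.
  apply Rmult_le_compat_l, subset_norm_ge; auto.
Qed.

Lemma subset_sum_extend N N' y F : (N <= N')%nat -> (forall n, (N <= n)%nat -> y n = 0) ->
  subset_sum N' y F = subset_sum N y F.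
Proof.
  intros H Z. apply vsum_extend; auto. intros i Hi. rewrite Z by auto. destruct (F i); auto. apply vscal_0.
Qed.

Lemma subset_norm_extend N N' y : (N <= N')%nat -> (forall n, (N <= n)%nat -> y n = 0) ->
  subset_norm N' y = subset_norm N y.
Proof.
  intros H Z. apply Rle_antisym; apply subset_norm_le; intro F.
  - rewrite (subset_sum_extend N N' y F H Z). apply subset_norm_ge.
  - rewrite <- (subset_sum_extend N N' y F H Z). apply subset_norm_ge.
Qed.

Lemma subset_norm_mass M N y : (forall n, vnorm (u n) <= M) -> (forall n, 0 <= y n) ->
  subset_norm N y <= M * rsum N y.
Proof.
  intros HM Hy. apply subset_norm_le. intro F.
  eapply Rle_trans; [apply vnorm_vsum|]. rewrite <- rsum_scal. apply rsum_le. intros i _.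
  specialize (HM i). specialize (Hy i). destruct (F i).
  - rewrite vnorm_scal, Rabs_right by lra. nra.
  - rewrite vnorm_0. pose proof (vnorm_nonneg (u i)). nra.
Qed.

Lemma dual_subset_sum N y F f : dual_ball V f ->
  f (subset_sum N y F) = rsum N (fun n => if F n then y n * f (u n) else 0).
Proof.
  intros [FA [FS _]]. unfold subset_sum. rewrite (linear_vsum f FA FS). apply rsum_ext. intros i _.
  destruct (F i); [apply FS | apply linear_0; auto].
Qed.

(* The two halves of [subset_norm N y = sup_f sum_n y n * (f (u n))^+] over the dual ball. *)
Lemma subset_norm_ge_dual N y f : dual_ball V f -> (forall n, 0 <= y n) ->
  rsum N (fun n => y n * Rmax (f (u n)) 0) <= subset_norm N y.
Proof.
  intros Hf Hy. set (F := fun n => if Rlt_dec 0 (f (u n)) then true else false).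
  eapply Rle_trans; [| apply (subset_norm_ge N y F)].
  replace (rsum N (fun n => y n * Rmax (f (u n)) 0)) with (f (subset_sum N y F)).
  - destruct Hf as [_ [_ Hb]]. eapply Rle_trans; [apply Rle_abs | apply Hb].
  - rewrite (dual_subset_sum N y F f Hf). apply rsum_ext. intros i _. unfold F.
    destruct (Rlt_dec 0 (f (u i))); [rewrite Rmax_left | rewrite Rmax_right]; lra.
Qed.

Lemma dual_subset_sum_le f N y F : dual_ball V f -> (forall n, 0 <= y n) ->
  f (subset_sum N y F) <= rsum N (fun n => y n * Rmax (f (u n)) 0).
Proof.
  intros Hf Hy. rewrite (dual_subset_sum N y F f Hf). apply rsum_le. intros i _. specialize (Hy i).
  pose proof (Rmax_l (f (u i)) 0). pose proof (Rmax_r (f (u i)) 0). destruct (F i); nra.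
Qed.

End SubsetNorm.

(** * Blocks with small subset norm *)

Definition admissible (eps0 : R) (a b : nat) (y : nat -> R) : Prop :=
  (a <= b)%nat /\ (forall n, 0 <= y n) /\ (forall n, (n < a \/ b <= n)%nat -> y n = 0) /\
  rsum b y = 1 /\ (forall n, y n <= eps0).

Lemma admissible_exists (eps0 : R) (a : nat) : 0 < eps0 -> exists b y, admissible eps0 a b y.
Proof.
  intro He. destruct (INR_unbounded (/ eps0)) as [Q HQ].
  assert (HQp : (0 < Q)%nat).
  { destruct Q; [simpl in HQ; pose proof (Rinv_0_lt_compat eps0 He); lra | lia]. }
  assert (HQr : 0 < INR Q) by (apply lt_0_INR; auto).
  exists (a + Q)%nat, (fun n => if andb (Nat.leb a n) (Nat.ltb n (a + Q)) then / INR Q else 0).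
  split; [lia|split; [|split; [|split]]].
  - intro n. destruct (andb (Nat.leb a n) (Nat.ltb n (a + Q))); [apply Rlt_le, Rinv_0_lt_compat; auto | lra].
  - intros n Hn. destruct (Nat.leb a n) eqn:E1; destruct (Nat.ltb n (a + Q)) eqn:E2; simpl; auto.
    apply Nat.leb_le in E1. apply Nat.ltb_lt in E2. lia.
  - rewrite rsum_split, (rsum_zero a), (rsum_ext _ _ (fun _ => / INR Q)).
    + assert (Hk : forall k, rsum k (fun _ => / INR Q) = INR k * / INR Q).
      { induction k; simpl rsum; [simpl; ring|]. rewrite IHk, S_INR. ring. }
      rewrite Hk. field. lra.
    + intros i Hi. replace (Nat.leb a (a + i)) with true by (symmetry; apply Nat.leb_le; lia).
      replace (Nat.ltb (a + i) (a + Q)) with true by (symmetry; apply Nat.ltb_lt; lia). reflexivity.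
    + intros i Hi. destruct (Nat.leb a i) eqn:E1; simpl; auto. apply Nat.leb_le in E1; lia.
  - intro n. destruct (andb (Nat.leb a n) (Nat.ltb n (a + Q))); [|lra].
    apply Rmult_lt_compat_l with (r := eps0) in HQ; auto. rewrite Rinv_r in HQ by lra.
    apply Rlt_le. apply (Rmult_lt_reg_r (INR Q)); auto. rewrite Rinv_l by lra. lra.
Qed.

Section Construction.
Context {V : BanachSpace}.
Variables (u : nat -> V) (eps0 eta : R).
Hypothesis eps0_pos : 0 < eps0.
Hypothesis eta_pos : 0 < eta.

Definition alpha (a : nat) (S : nat -> R) (r : R) : R :=
  epsilon (inhabits 0) (is_inf (fun e => exists b y, admissible eps0 a b y /\
                                              e = subset_norm u b (fun n => S n + r * y n))).

Lemma alpha_spec a S r :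
  is_inf (fun e => exists b y, admissible eps0 a b y /\ e = subset_norm u b (fun n => S n + r * y n))
         (alpha a S r).
Proof.
  unfold alpha. apply epsilon_spec, (is_inf_exists _ 0).
  - intros e [b [y [_ ->]]]. apply subset_norm_nonneg.
  - destruct (admissible_exists eps0 a eps0_pos) as [b [y Hy]]. eexists; exists b, y. split; eauto.
Qed.

Lemma alpha_le a S r b y : admissible eps0 a b y ->
  alpha a S r <= subset_norm u b (fun n => S n + r * y n).
Proof. intro Hy. apply (proj1 (alpha_spec a S r)). exists b, y; auto. Qed.

Lemma alpha_ge a S r c : (forall b y, admissible eps0 a b y -> c <= subset_norm u b (fun n => S n + r * y n)) ->
  c <= alpha a S r.
Proof. intro H. apply (proj2 (alpha_spec a S r)). intros e [b [y [Hy ->]]]. auto. Qed.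

Definition next_block (K a : nat) (S : nat -> R) : nat * (nat -> R) :=
  epsilon (inhabits (a, S)) (fun p => admissible eps0 a (fst p) (snd p) /\
     subset_norm u (fst p) (fun n => S n + (/2)^K * snd p n) <= alpha a S ((/2)^K) + eta * (/4)^K).

Lemma next_block_spec K a S :
  let p := next_block K a S in
  admissible eps0 a (fst p) (snd p) /\
  subset_norm u (fst p) (fun n => S n + (/2)^K * snd p n) <= alpha a S ((/2)^K) + eta * (/4)^K.
Proof.
  unfold next_block. apply epsilon_spec.
  destruct (is_inf_approx _ _ (eta * (/4)^K) (alpha_spec a S ((/2)^K))) as [e [[b [y [Hy ->]]] Hlt]].
  { apply Rmult_lt_0_compat; auto. apply pow_lt; lra. }
  exists (b, y). simpl. split; auto. lra.
Qed.

Fixpoint stage (K : nat) : nat * (nat -> R) :=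
  match K with
  | O => (O, fun _ => 0)
  | S K => let p := stage K in let q := next_block K (fst p) (snd p) in
           (fst q, fun n => snd p n + (/2)^(S K) * snd q n)
  end.

Definition stage_end K := fst (stage K).
Definition weights K := snd (stage K).
Definition block K := snd (next_block K (stage_end K) (weights K)).
Definition alpha_stage K := alpha (stage_end K) (weights K) ((/2)^K).

Lemma weights_S K n : weights (S K) n = weights K n + (/2)^(S K) * block K n.
Proof. reflexivity. Qed.

Lemma block_spec K :
  admissible eps0 (stage_end K) (stage_end (S K)) (block K) /\
  subset_norm u (stage_end (S K)) (fun n => weights K n + (/2)^K * block K n) <= alpha_stage K + eta * (/4)^K.
Proof. apply next_block_spec. Qed.

Lemma stage_end_lt K : (stage_end K < stage_end (S K))%nat.
Proof.
  destruct (block_spec K) as [[H1 [_ [H3 [H4 _]]]] _].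
  destruct (Nat.eq_dec (stage_end K) (stage_end (S K))) as [E | E]; [|lia].
  exfalso. rewrite rsum_zero in H4; [lra|]. intros i Hi. apply H3. left. lia.
Qed.

Lemma stage_end_mono K L : (K <= L)%nat -> (stage_end K <= stage_end L)%nat.
Proof. induction 1; [lia|]. pose proof (stage_end_lt m). lia. Qed.

Lemma stage_end_ge K : (K <= stage_end K)%nat.
Proof. induction K; [lia|]. pose proof (stage_end_lt K). lia. Qed.

Lemma weights_spec K :
  (forall n, 0 <= weights K n) /\ (forall n, (stage_end K <= n)%nat -> weights K n = 0) /\
  rsum (stage_end K) (weights K) = 1 - (/2)^K.
Proof.
  induction K as [|K [I1 [I2 I3]]].
  { unfold weights, stage_end; simpl. split; [intros; lra | split; [reflexivity | ring]]. }
  destruct (block_spec K) as [[H1 [H2 [H3 [H4 H5]]]] _]. pose proof (half_pow_pos (S K)).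
  split; [|split].
  - intro n. rewrite weights_S. specialize (I1 n). specialize (H2 n). nra.
  - intros n Hn. rewrite weights_S, I2, H3 by lia. ring.
  - replace (rsum (stage_end (S K)) (weights (S K))) with
      (rsum (stage_end (S K)) (weights K) + (/2)^(S K) * rsum (stage_end (S K)) (block K)).
    + rewrite H4, (rsum_extend (stage_end K)), I3; [simpl; field | lia | auto].
    + rewrite <- rsum_scal, <- rsum_add. apply rsum_ext. intros; rewrite weights_S; reflexivity.
Qed.

Lemma weights_stable K L n : (K <= L)%nat -> (n < stage_end K)%nat -> weights L n = weights K n.
Proof.
  intros HL Hn. induction HL; auto. rewrite weights_S, IHHL.
  destruct (block_spec m) as [[_ [_ [H3 _]]] _]. pose proof (stage_end_mono K m HL).
  rewrite H3; [ring | lia].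
Qed.

Lemma weights_increment K L n : (K <= L)%nat ->
  0 <= weights L n - weights K n <= eps0 * ((/2)^K - (/2)^L).
Proof.
  induction 1 as [|m HL IH]; [split; lra|].
  rewrite weights_S. destruct (block_spec m) as [[_ [H2 [_ [_ H5]]]] _].
  specialize (H2 n). specialize (H5 n). pose proof (half_pow_pos (S m)).
  assert (E : (/2)^m - (/2)^(S m) = (/2)^(S m)) by (simpl; field).
  assert ((/2)^(S m) * block m n <= (/2)^(S m) * eps0) by (apply Rmult_le_compat_l; lra).
  replace ((/2)^K - (/2)^(S m)) with (((/2)^K - (/2)^m) + ((/2)^m - (/2)^(S m))) by ring.
  rewrite E. nra.
Qed.

(* A block [z] for stage [K+1] yields the block [(y_K + z)/2] for stage [K] with the same weights. *)
Lemma alpha_stage_mono K : alpha_stage K <= alpha_stage (S K).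
Proof.
  destruct (block_spec K) as [[H1 [H2 [H3 [H4 H5]]]] _].
  apply alpha_ge. intros b y [G1 [G2 [G3 [G4 G5]]]].
  set (z := fun n => /2 * block K n + /2 * y n).
  assert (Hz : admissible eps0 (stage_end K) b z).
  { split; [pose proof (stage_end_lt K); lia|split; [|split; [|split]]].
    - intro n; unfold z; specialize (H2 n); specialize (G2 n); lra.
    - intros n Hn. unfold z. rewrite H3, G3; [lra | lia | pose proof (stage_end_lt K); lia].
    - unfold z. rewrite rsum_add, !rsum_scal, G4, (rsum_extend (stage_end (S K)) b), H4; [field | lia |].
      intros; apply H3; lia.
    - intro n; unfold z; specialize (H5 n); specialize (G5 n); lra. }
  replace (fun n => weights (S K) n + (/ 2) ^ S K * y n) with (fun n => weights K n + (/2)^K * z n).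
  - apply alpha_le; auto.
  - apply functional_extensionality. intro n. rewrite weights_S. unfold z. simpl. ring.
Qed.

(* [S_(K+1)] is the midpoint of [S_K] and [S_K + 2^-K y_K]. *)
Lemma subset_norm_weights_S K :
  subset_norm u (stage_end (S K)) (weights (S K)) <=
  /2 * subset_norm u (stage_end K) (weights K) + /2 * (alpha_stage K + eta * (/4)^K).
Proof.
  destruct (block_spec K) as [_ Hp]. destruct (weights_spec K) as [_ [S2 _]].
  replace (weights (S K)) with (fun n => /2 * weights K n + /2 * (weights K n + (/2)^K * block K n))
    by (apply functional_extensionality; intro n; rewrite weights_S; simpl; field).
  eapply Rle_trans; [apply subset_norm_add|].
  pose proof (subset_norm_scal u (stage_end (S K)) (/2) (weights K) ltac:(lra)) as Q1.
  pose proof (subset_norm_scal u (stage_end (S K)) (/2) (fun n => weights K n + (/2)^K * block K n)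
                ltac:(lra)) as Q2.
  rewrite (subset_norm_extend u (stage_end K) (stage_end (S K)) (weights K)) in Q1
    by (auto; pose proof (stage_end_lt K); lia).
  lra.
Qed.

Lemma alpha_stage_gap c : c <= alpha_stage O ->
  forall K, (/2)^K * (c - eta * (2 - 2 * (/2)^K)) <= alpha_stage K - subset_norm u (stage_end K) (weights K).
Proof.
  intros H0 K. induction K.
  - unfold stage_end at 1. simpl. rewrite subset_norm_0. simpl in *. lra.
  - pose proof (alpha_stage_mono K). pose proof (subset_norm_weights_S K).
    assert (E1 : (/2)^(S K) = /2 * (/2)^K) by reflexivity.
    assert (E2 : (/4)^K = (/2)^K * (/2)^K) by (rewrite <- Rpow_mult_distr; f_equal; field).
    rewrite E1, E2 in *. pose proof (half_pow_pos K). nra.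
Qed.

Section Bounded.
Variable M : R.
Hypothesis u_bounded : forall n, vnorm (u n) <= M.

Lemma bound_nonneg : 0 <= M.
Proof. pose proof (u_bounded O); pose proof (vnorm_nonneg (u O)); lra. Qed.

(* [(S_L - S_K) / (2^-K - 2^-L)] is admissible from [A_K], and differs from the rescaled
   [S_L] by a term of mass [2^-L]. *)
Lemma alpha_stage_le K L : (K < L)%nat ->
  alpha_stage K <= subset_norm u (stage_end L) (weights L) + M * (/2)^L.
Proof.
  intros HKL. set (w := (/2)^K - (/2)^L).
  assert (Hw : 0 < w).
  { unfold w. replace L with (K + (L - K))%nat by lia. rewrite pow_add.
    pose proof (half_pow_pos K). assert ((/2)^(L - K) < 1) by (apply pow_lt_1_compat; [lra | lia]). nra. }
  destruct (weights_spec K) as [SK1 [SK2 SK3]]. destruct (weights_spec L) as [SL1 [SL2 SL3]].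
  assert (HA : (stage_end K <= stage_end L)%nat) by (apply stage_end_mono; lia).
  set (d := fun n => weights L n - weights K n).
  assert (Hd : forall n, 0 <= d n <= eps0 * w) by (intro n; apply weights_increment; lia).
  assert (Hsd : rsum (stage_end L) d = w).
  { unfold d. rewrite (rsum_ext _ _ (fun n => weights L n + (-1) * weights K n)) by (intros; ring).
    rewrite rsum_add, rsum_scal, SL3, (rsum_extend (stage_end K)), SK3 by (auto; lia). unfold w; ring. }
  set (z := fun n => / w * d n).
  assert (Hz : admissible eps0 (stage_end K) (stage_end L) z).
  { split; [auto|split; [|split; [|split]]].
    - intro n. unfold z. specialize (Hd n). apply Rmult_le_pos; [apply Rlt_le, Rinv_0_lt_compat|]; lra.
    - intros n [Hn | Hn]; unfold z, d.
      + rewrite (weights_stable K L n) by lia. ring.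
      + rewrite SL2, SK2 by lia. ring.
    - unfold z. rewrite rsum_scal, Hsd. field; lra.
    - intro n. unfold z. specialize (Hd n). apply (Rmult_le_reg_l w); auto.
      rewrite <- Rmult_assoc, Rinv_r by lra. lra. }
  eapply Rle_trans; [apply (alpha_le _ _ _ _ _ Hz)|].
  set (t := (/2)^L / w).
  replace (fun n => weights K n + (/2)^K * z n) with (fun n => weights L n + t * d n)
    by (apply functional_extensionality; intro n; unfold z, d, t, w; field; fold w; lra).
  eapply Rle_trans; [apply subset_norm_add|].
  assert (Ht : 0 <= t) by (unfold t; pose proof (half_pow_pos L); apply Rlt_le, Rdiv_lt_0_compat; lra).
  eapply Rle_trans; [apply Rplus_le_compat_l, subset_norm_scal; auto|].
  pose proof (subset_norm_mass u M (stage_end L) d u_bounded (fun n => proj1 (Hd n))) as Pm. rewrite Hsd in Pm.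
  assert (t * subset_norm u (stage_end L) d <= t * (M * w)) by (apply Rmult_le_compat_l; auto).
  replace (t * (M * w)) with (M * (/2)^L) in H by (unfold t; field; lra). lra.
Qed.

Definition stage_vector L F := subset_sum u (stage_end L) (weights L) F.

Lemma stage_vector_cauchy L L' F : (L <= L')%nat ->
  vnorm (vadd (stage_vector L' F) (vopp (stage_vector L F))) <= M * (/2)^L.
Proof.
  intros HL. assert (HA := stage_end_mono L L' HL).
  destruct (weights_spec L') as [SL1' [_ SL3']].
  unfold stage_vector, subset_sum. rewrite (vsum_split_le _ _ _ HA).
  rewrite (vsum_ext (stage_end L) _ (fun n => if F n then vscal (weights L n) (u n) else vzero))
    by (intros i Hi; rewrite (weights_stable L L' i) by auto; reflexivity).
  rewrite vaddKl. eapply Rle_trans; [apply vnorm_vsum|].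
  eapply Rle_trans; [apply (rsum_le _ _ (fun i => M * weights L' (stage_end L + i)%nat))|].
  - intros i _. specialize (u_bounded (stage_end L + i)%nat). specialize (SL1' (stage_end L + i)%nat).
    destruct (F _).
    + rewrite vnorm_scal, Rabs_right by lra. rewrite (Rmult_comm M); apply Rmult_le_compat_l; lra.
    + rewrite vnorm_0. pose proof (vnorm_nonneg (u (stage_end L + i)%nat)). nra.
  - rewrite rsum_scal. rewrite (rsum_split_le _ _ _ HA) in SL3'.
    rewrite (rsum_ext (stage_end L) (weights L') (weights L)) in SL3' by (intros; apply weights_stable; auto).
    destruct (weights_spec L) as [_ [_ SL3]].
    pose proof (half_pow_pos L'). apply Rmult_le_compat_l; [apply bound_nonneg | lra].
Qed.

Definition limit_vector F : V :=
  epsilon (inhabits vzero) (fun l => forall L, vnorm (vadd (stage_vector L F) (vopp l)) <= M * (/2)^L).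

Lemma limit_vector_spec F L : vnorm (vadd (stage_vector L F) (vopp (limit_vector F))) <= M * (/2)^L.
Proof.
  revert L. unfold limit_vector. apply epsilon_spec, complete_half_pow_limit; [apply bound_nonneg|].
  intros; apply stage_vector_cauchy; auto.
Qed.

Lemma limit_norm_attains_max : exists Fs, forall F, vnorm (limit_vector F) <= vnorm (limit_vector Fs).
Proof.
  pose proof bound_nonneg as M0.
  apply (cantor_attains_sup (fun F => vnorm (limit_vector F)) M).
  - intro F. pose proof (limit_vector_spec F O) as H.
    unfold stage_vector, subset_sum, stage_end in H. simpl in H. rewrite vadd_0l, vnorm_opp in H. lra.
  - intros e He. destruct (pow_lt_1_zero (/2) ltac:(rewrite Rabs_right; lra) (e / (2 * M + 1))) as [L HL].
    { apply Rdiv_lt_0_compat; lra. }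
    specialize (HL L (le_n L)). rewrite Rabs_right in HL by (apply Rle_ge, pow_le; lra).
    exists (stage_end L). intros F F' Hag.
    assert (E : stage_vector L F = stage_vector L F').
    { unfold stage_vector, subset_sum. apply vsum_ext. intros i Hi. rewrite (Hag i Hi). reflexivity. }
    pose proof (limit_vector_spec F L) as X1. pose proof (limit_vector_spec F' L) as X2. rewrite E in X1.
    pose proof (vnorm_sub_ge (limit_vector F') (stage_vector L F')) as R1. rewrite vnorm_sub_sym in R1.
    pose proof (vnorm_sub_ge (stage_vector L F') (limit_vector F)) as R2.
    apply Rmult_lt_compat_l with (r := 2 * M + 1) in HL; [|lra]. unfold Rdiv in HL.
    rewrite <- Rmult_assoc, (Rmult_comm (2 * M + 1) e), Rmult_assoc, Rinv_r, Rmult_1_r in HL by lra.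
    pose proof (half_pow_pos L). nra.
Qed.

Section Maximiser.
Variable Fs : nat -> bool.
Hypothesis Fs_max : forall F, vnorm (limit_vector F) <= vnorm (limit_vector Fs).

(* Truncating F to [[0, A_L)] does not change the stage-[L'] vectors for [L' >= L]. *)
Lemma subset_norm_weights_le_max L : subset_norm u (stage_end L) (weights L) <= vnorm (limit_vector Fs).
Proof.
  apply subset_norm_le. intro F.
  set (F' := fun n => if Nat.ltb n (stage_end L) then F n else false).
  apply (le_of_le_half_pow _ _ M L bound_nonneg). intros L' HL'.
  assert (HA := stage_end_mono L L' HL').
  assert (E : stage_vector L' F' = subset_sum u (stage_end L) (weights L) F).
  { unfold stage_vector, subset_sum. rewrite (vsum_split_le _ _ _ HA).
    rewrite (vsum_zero (stage_end L' - stage_end L)).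
    - rewrite vadd_0. apply vsum_ext. intros i Hi. unfold F'.
      replace (Nat.ltb i (stage_end L)) with true by (symmetry; apply Nat.ltb_lt; auto).
      rewrite (weights_stable L L' i) by auto. reflexivity.
    - intros i _. unfold F'.
      replace (Nat.ltb (stage_end L + i) (stage_end L)) with false by (symmetry; apply Nat.ltb_ge; lia).
      reflexivity. }
  rewrite <- E. pose proof (limit_vector_spec F' L').
  pose proof (vnorm_sub_ge (stage_vector L' F') (limit_vector F')). specialize (Fs_max F'). lra.
Qed.

Lemma limit_max_le_dual f L : dual_ball V f -> f (limit_vector Fs) = vnorm (limit_vector Fs) ->
  vnorm (limit_vector Fs) - M * (/2)^L <= rsum (stage_end L) (fun n => weights L n * Rmax (f (u n)) 0).
Proof.
  intros Fd Fn. destruct (weights_spec L) as [S1 _].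
  eapply Rle_trans; [| apply (dual_subset_sum_le u f _ _ Fs Fd S1)]. fold (stage_vector L Fs).
  pose proof (limit_vector_spec Fs L). destruct Fd as [FA [FS FB]].
  pose proof (FB (vadd (stage_vector L Fs) (vopp (limit_vector Fs)))) as B.
  rewrite FA, dual_ball_opp in B by (split; auto). apply Rabs_le_bounds in B. lra.
Qed.

End Maximiser.

(* Up to [A_K] the weights [S_L] agree with [S_K]; beyond [A_K] they carry mass at most [2^-K]. *)
Lemma dual_weights_le f d K L : dual_ball V f -> 0 <= d ->
  (forall n, (stage_end K <= n)%nat -> f (u n) <= d) -> (K < L)%nat ->
  rsum (stage_end L) (fun n => weights L n * Rmax (f (u n)) 0) <=
  subset_norm u (stage_end K) (weights K) + d * (/2)^K.
Proof.
  intros Fd Hd HK HL. assert (HA := stage_end_mono K L ltac:(lia)).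
  destruct (weights_spec K) as [SK1 [_ SK3]]. destruct (weights_spec L) as [SL1 [_ SL3]].
  rewrite (rsum_split_le _ _ _ HA).
  rewrite (rsum_ext (stage_end K) _ (fun n => weights K n * Rmax (f (u n)) 0))
    by (intros; rewrite (weights_stable K L) by (auto; lia); reflexivity).
  pose proof (subset_norm_ge_dual u (stage_end K) (weights K) f Fd SK1).
  set (A := stage_end K) in *.
  assert (rsum (stage_end L - A) (fun i => weights L (A + i)%nat * Rmax (f (u (A + i)%nat)) 0)
          <= d * rsum (stage_end L - A) (fun i => weights L (A + i)%nat)).
  { rewrite <- rsum_scal. apply rsum_le. intros i _. specialize (SL1 (A + i)%nat).
    assert (Rmax (f (u (A + i)%nat)) 0 <= d) by (apply Rmax_lub; [apply HK; unfold A; lia | auto]).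
    pose proof (Rmax_r (f (u (A + i)%nat)) 0). nra. }
  rewrite (rsum_split_le _ _ _ HA), (rsum_ext A (weights L) (weights K)) in SL3
    by (intros; apply weights_stable; auto; lia).
  fold A in SL3. pose proof (half_pow_pos L). nra.
Qed.

(* Compare the maximal limit vector with a norming functional [f]: [f (u n)] is eventually small,
   which pins [alpha_stage K] to within [d 2^-K] of the stage-[K] subset norm. *)
Lemma alpha_stage_gap_small d : weakly_null V u -> 0 < d ->
  exists K, alpha_stage K - subset_norm u (stage_end K) (weights K) <= d * (/2)^K.
Proof.
  intros hu Hd. destruct limit_norm_attains_max as [Fs HFs].
  destruct (norming_spec (limit_vector Fs)) as [Fd Fn].
  set (f := norming (limit_vector Fs)) in *.
  destruct (hu f (dual_ball_dual f Fd) d Hd) as [K HK].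
  exists K. enough (alpha_stage K <= subset_norm u (stage_end K) (weights K) + d * (/2)^K) by lra.
  apply (le_of_le_half_pow _ _ (2 * M) (S K)); [pose proof bound_nonneg; lra|].
  intros L HL.
  assert (HfK : forall n, (stage_end K <= n)%nat -> f (u n) <= d).
  { intros n Hn. pose proof (stage_end_ge K). specialize (HK n ltac:(lia)).
    unfold Rdist in HK. rewrite Rminus_0_r in HK. apply Rabs_def2 in HK. lra. }
  pose proof (alpha_stage_le K L ltac:(lia)).
  pose proof (subset_norm_weights_le_max Fs HFs L).
  pose proof (limit_max_le_dual Fs f L Fd Fn).
  pose proof (dual_weights_le f d K L Fd ltac:(lra) HfK ltac:(lia)).
  lra.
Qed.

End Bounded.
End Construction.

Theorem bounded_weakly_null_small_block (V : BanachSpace) (u : nat -> V) (M : R)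
  (u_bounded : forall n, vnorm (u n) <= M) (hu : weakly_null V u) (eps0 c : R) :
  0 < eps0 -> 0 < c -> exists b y, admissible eps0 O b y /\ forall F, vnorm (subset_sum u b y F) <= c.
Proof.
  intros He Hc. apply NNPP. intro Hn.
  assert (Ha0 : c <= alpha_stage u eps0 (c / 4) O).
  { apply alpha_ge; [exact He|]. intros b y Hy. unfold weights; simpl.
    replace (fun n => 0 + 1 * y n) with y by (apply functional_extensionality; intro; ring).
    apply Rnot_lt_le. intro Hlt. apply Hn. exists b, y. split; auto.
    intro F. pose proof (subset_norm_ge u b y F). lra. }
  assert (Heta : 0 < c / 4) by lra.
  destruct (alpha_stage_gap_small u eps0 (c / 4) He Heta M u_bounded (c / 4) hu Heta) as [K HK].
  pose proof (alpha_stage_gap u eps0 (c / 4) He Heta c Ha0 K).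
  pose proof (half_pow_pos K).
  nra.
Qed.

Lemma frequently_subseq (P : nat -> Prop) : (forall N, exists n, (n >= N)%nat /\ P n) ->
  exists sigma : nat -> nat, (forall k, (sigma k < sigma (S k))%nat) /\ (forall k, P (sigma k)).
Proof.
  intro HP. destruct (choice (fun N n => (n >= N)%nat /\ P n) HP) as [next Hnext].
  set (sigma := fix sigma k := match k with O => next O | S k => next (S (sigma k)) end).
  exists sigma. split; [intro k; simpl; destruct (Hnext (S (sigma k))); lia | intros [|k]; apply Hnext].
Qed.

Lemma weakly_null_subseq (V : BanachSpace) (v : nat -> V) (sigma : nat -> nat) :
  (forall k, (sigma k < sigma (S k))%nat) -> weakly_null V v -> weakly_null V (fun k => v (sigma k)).
Proof.
  intros Hs hv f Hf e He. destruct (hv f Hf e He) as [N HN]. exists N. intros n Hn. apply HN.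
  enough (forall k, (k <= sigma k)%nat) by (specialize (H n); lia).
  induction k; [lia|]. specialize (Hs k). lia.
Qed.

Theorem lemma19 (V : BanachSpace) (v : nat -> V) (hv : weakly_null V v) :
  forall eps : R, eps > 0 ->
  exists (j : nat) (k : nat -> nat) (lam : nat -> R),
    (forall i, (i < j)%nat -> (k i < k (S i))%nat) /\
    (forall i, (i <= j)%nat -> 0 <= lam i) /\
    sum_f_R0 lam j = 1 /\
    (forall i, (i <= j)%nat -> lam i <= eps) /\
    (forall F : nat -> bool,
       vnorm (vsum (S j) (fun i => if F i then vscal (lam i) (v (k i)) else vzero))
       <= eps).
Proof.
  intros eps Heps.
  destruct (weakly_null_bounded_subseq v hv) as [M HM].
  destruct (frequently_subseq (fun n => vnorm (v n) <= M) HM) as [sigma [Hsigma Hbounded]].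
  destruct (bounded_weakly_null_small_block V (fun k => v (sigma k)) M Hbounded
              (weakly_null_subseq V v sigma Hsigma hv) eps eps Heps Heps)
    as [b [lam [[_ [Hpos [_ [Hsum Hsmall]]]] Hsubset]]].
  destruct b as [|j]; [simpl in Hsum; lra|].
  exists j, sigma, lam. repeat split; auto.
  rewrite sum_f_R0_rsum. exact Hsum.
Qed.
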